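(* Let $n\ge1$ and $\alpha^1,\dots,\alpha^n\in\mathrm{ord}$. It is impossible that $\alpha^i<\alpha^1,\dots,\alpha^n$ holds for every $i\in\{1,\dots,n\}$.
   Context: Work constructively. Let $\mathfrak F$ be a set of index sets containing $\mathbb N$ and each $\mathbb N_k=\{n\in\mathbb N:n<k\}$ ($k\ge0$), closed (up to isomorphism) under finitely enumerated subsets, sets of finitely enumerated subsets, and disjoint unions indexed by elements of $\mathfrak F$. A finitely enumerated subset of $A$ is one given by a map $\mathbb N_k\to A$; write $F\subseteq_f I$. The set $\mathrm{ord}$ is inductively generated by $\underline 0$ and, for every family $(\alpha_i)_{i\in I}$ with $I\in\mathfrak F$, $\alpha_i\in\mathrm{ord}$, an element $\mathrm S(\alpha_i)_{i\in I}$; for such $\alpha$, $I_\alpha=I$ and $\alpha_i$ are its definitional subordinals; $I_{\underline 0}=\emptyset$. For a finite list $F$ in $I_\alpha$, $\alpha_F$ is the list of the $\alpha_i$, $i\in F$. Relations between an element and a nonempty finite list, by simultaneous induction: $\alpha\le\beta^1,\dots,\beta^m$ means $\alpha_i<\beta^1,\dots,\beta^m$ for all $i\in I_\alpha$; $\alpha<\beta^1,\dots,\beta^m$ means there exist $F_1\subseteq_f I_{\beta^1},\dots,F_m\subseteq_f I_{\beta^m}$, not all empty, with $\alpha\le\beta^1_{F_1},\dots,\beta^m_{F_m}$ (concatenated list). *)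

From mathcomp Require Import all_boot.
Set Implicit Arguments. Unset Strict Implicit. Unset Printing Implicit Defensive.

Definition iso (A B : Type) : Type :=
  { f : A -> B & { g : B -> A & (forall a, g (f a) = a) /\ (forall b, f (g b) = b) } }.

(* A set F of index sets is presented as a type of codes U with decoding El. *)
Record index_universe (U : Type) (El : U -> Type) : Type := {
  iu_nat  : { u : U & iso (El u) nat };
  iu_Nk   : forall k : nat, { u : U & iso (El u) 'I_k };
  iu_fsub : forall (u : U) (k : nat) (f : 'I_k -> El u),
              { v : U & iso (El v) { x : El u | exists j, f j = x } };
  iu_fsubs : forall u : U, { v : U & iso (El v) { k : nat & 'I_k -> El u } };
  iu_sigma : forall (u : U) (g : El u -> U),
              { v : U & iso (El v) { i : El u & El (g i) } }
}.

Section Ord.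
Variables (U : Type) (El : U -> Type).

Inductive ord : Type :=
| ord0 : ord
| ordS : forall u : U, (El u -> ord) -> ord.

Definition idx (a : ord) : Type :=
  match a with ord0 => Empty_set | @ordS u _ => El u end.

Definition sub (a : ord) : idx a -> ord :=
  match a as a0 return idx a0 -> ord with
  | ord0 => fun e => match e with end
  | @ordS u f => f
  end.

(* A choice of finitely enumerated subsets F_1 ⊆_f I_{β^1}, ..., F_m ⊆_f I_{β^m},
   each given by an enumeration (a finite list of indices). *)
Fixpoint choices (bs : seq ord) : Type :=
  match bs with
  | [::] => unit
  | b :: bs' => (seq (idx b) * choices bs')%type
  end.

Fixpoint apply_ch (bs : seq ord) : choices bs -> seq ord :=
  match bs as bs0 return choices bs0 -> seq ord with
  | [::] => fun _ => [::]
  | b :: bs' => fun c => map (@sub b) c.1 ++ @apply_ch bs' c.2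
  end.

Fixpoint ch_nonempty (bs : seq ord) : choices bs -> Prop :=
  match bs as bs0 return choices bs0 -> Prop with
  | [::] => fun _ => False
  | b :: bs' => fun c => c.1 <> [::] \/ @ch_nonempty bs' c.2
  end.

Fixpoint ord_le (a : ord) (bs : seq ord) : Prop :=
  match a with
  | ord0 => True
  | @ordS u f => forall i : El u,
      exists c : choices bs, ch_nonempty c /\ ord_le (f i) (apply_ch c)
  end.

Definition ord_lt (a : ord) (bs : seq ord) : Prop :=
  exists c : choices bs, ch_nonempty c /\ ord_le a (apply_ch c).

End Ord.

From mathcomp Require Import all_boot.
From Stdlib Require List.

Set Implicit Arguments.
Unset Strict Implicit.
Unset Printing Implicit Defensive.

(* Say that a nonempty list ys descends from zs if every element of ys is a
   definitional subordinal of some element of zs.  Descent is well founded: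
   it is a finite-multiset extension of the subordinal relation, and the
   usual accessibility argument applies.  Now if every z in zs satisfies
   z < zs, gathering the witnessing finite subsets gives a list ys descending
   from zs with z <= ys for all z in zs; an element of ys is a subordinal of
   some z <= ys, hence is < ys.  So the property passes to a descendant,
   which is impossible by well-foundedness.  The closure properties of the
   index universe play no role. *)

Section OrdLists.
Variables (U : Type) (El : U -> Type).
Local Notation ord := (ord El).
Implicit Types (x y z : ord) (bs xs ys zs ws : seq ord).

Definition child y z := exists i : idx z, y = sub i.

(* [ord] has no decidable equality, so membership in lists is [List.In]. *)
Definition children ys zs :=
  forall y, List.In y ys -> exists2 z, List.In z zs & child y z.

Lemma children_incl ys zs zs' :
  children ys zs -> List.incl zs zs' -> children ys zs'.
Proof. by move=> ch inc y /ch [z /inc z_in yz]; exists z. Qed.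

Lemma incl_nonempty ys ys' : ys <> [::] -> List.incl ys ys' -> ys' <> [::].
Proof. by case: ys => [|y ys] // _ inc E; move: (inc y (or_introl erefl)); rewrite E. Qed.

Lemma ch_nonemptyP bs (c : choices bs) : ch_nonempty c <-> apply_ch c <> [::].
Proof.
elim: bs c => [|b bs IH] /=; first by split=> // /(_ erefl).
case=> [[|a s] c] /=; last by split=> // _; left.
by case: (IH c) => ne_c c_ne; split; [case=> // /ne_c | move/c_ne; right].
Qed.

Lemma children_apply_ch bs (c : choices bs) : children (apply_ch c) bs.
Proof.
elim: bs c => [|b bs IH] /=; first by move=> _ y [].
case=> s c y /List.in_app_iff [y_in | y_in].
- by move: y_in => /List.in_map_iff [i [<- _]]; exists b; [left | exists i].
- by have [z z_in yz] := IH c y y_in; exists z; [right |].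
Qed.

Fixpoint no_choice bs : choices bs :=
  match bs as bs0 return choices bs0 with
  | [::] => tt
  | b :: bs' => ([::], no_choice bs')
  end.

Lemma apply_ch_extend bs b (i : idx b) (c : choices bs) : List.In b bs ->
  exists c' : choices bs,
    List.incl (apply_ch c) (apply_ch c') /\ List.In (sub i) (apply_ch c').
Proof.
elim: bs c => [|b' bs IH] //= [s c] [E | /(IH c) [c' [sub_c' i_in]]].
- subst b'; exists (i :: s, c); split; [by move=> x; right | by left].
- exists (s, c'); split; last by apply/List.in_app_iff; right.
  by move=> x /List.in_app_iff [? | /sub_c' ?]; apply/List.in_app_iff; [left | right].
Qed.

Lemma apply_ch_cover bs ys :
  children ys bs -> exists c : choices bs, List.incl ys (apply_ch c).
Proof.
elim: ys => [|y ys IH] ch; first by exists (no_choice bs) => x [].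
have [|c sub_c] := IH; first by move=> x x_in; apply: ch; right.
have [b b_in [i ->]] := ch y (or_introl erefl).
have [c' [sub_c' i_in]] := apply_ch_extend i c b_in.
by exists c' => x [<- | /sub_c /sub_c'].
Qed.

Lemma ord_le_incl x ys ys' : ord_le x ys -> List.incl ys ys' -> ord_le x ys'.
Proof.
elim: x ys ys' => [|u f IH] ys ys' //= le_x sub_ys i.
have [c [c_ne le_fi]] := le_x i.
have [c' sub_c'] := apply_ch_cover (children_incl (children_apply_ch (c := c)) sub_ys).
exists c'; split; last exact: IH le_fi sub_c'.
by apply/ch_nonemptyP; apply: incl_nonempty sub_c'; apply/ch_nonemptyP.
Qed.

Lemma ord_lt_child y z ws : ord_le z ws -> child y z -> ord_lt y ws.
Proof. by case: z => [|u f] /= le_z [i ->]; [case: i | exact: le_z]. Qed.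

Lemma ord_lt_collect xs zs : (forall x, List.In x xs -> ord_lt x zs) ->
  exists ys, [/\ xs <> [::] -> ys <> [::], children ys zs
                & forall x, List.In x xs -> ord_le x ys].
Proof.
elim: xs => [|x xs IH] lt_xs; first by exists [::]; split=> // y [].
have [|ys [_ ch_ys le_ys]] := IH; first by move=> x' x'_in; apply: lt_xs; right.
have [c [c_ne le_x]] := lt_xs x (or_introl erefl).
exists (apply_ch c ++ ys); split.
- by move/ch_nonemptyP: c_ne; case: (apply_ch c).
- by move=> y /List.in_app_iff [/children_apply_ch | /ch_ys].
- move=> x' [<- | /le_ys le_x'].
  + exact: ord_le_incl le_x (List.incl_appl _ (List.incl_refl _)).
  + exact: ord_le_incl le_x' (List.incl_appr _ (List.incl_refl _)).
Qed.

Definition descend ys zs := ys <> [::] /\ children ys zs.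

Lemma children_nil ys : children ys [::] -> ys = [::].
Proof. by case: ys => // y ys /(_ y (or_introl erefl)) []. Qed.

Lemma Acc_descend_nil : Acc descend [::].
Proof. by constructor=> ys [ys_ne /children_nil]. Qed.

Lemma Acc_descend_children zs ys :
  Acc descend zs -> children ys zs -> Acc descend ys.
Proof.
case: ys => [|y ys] acc_zs ch; first exact: Acc_descend_nil.
by apply: (Acc_inv acc_zs); split.
Qed.

Lemma Acc_descend_incl zs ys : Acc descend zs -> List.incl ys zs -> Acc descend ys.
Proof.
move=> acc_zs inc; constructor=> ws [ws_ne ch_ws].
by apply: (Acc_inv acc_zs); split=> //; apply: children_incl ch_ws inc.
Qed.

Definition Acc_cons z := forall zs, Acc descend zs -> Acc descend (z :: zs).

Lemma Acc_descend_cat ys ts : (forall y, List.In y ys -> Acc_cons y) ->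
  Acc descend ts -> Acc descend (ys ++ ts).
Proof.
elim: ys => [|y ys IH] acc_ys acc_ts; first exact: acc_ts.
apply: (acc_ys y (or_introl erefl)); apply: IH acc_ts => y' y'_in.
by apply: acc_ys; right.
Qed.

Lemma children_cons_split z zs ys : children ys (z :: zs) ->
  exists ys1 ys2, [/\ forall y, List.In y ys1 -> child y z,
                      children ys2 zs & List.incl ys (ys1 ++ ys2)].
Proof.
elim: ys => [|y ys IH] ch; first by exists [::], [::]; split=> // y [].
have [|ys1 [ys2 [ch1 ch2 inc]]] := IH; first by move=> y' y'_in; apply: ch; right.
have [z' [<- | z'_in] yz'] := ch y (or_introl erefl).
- exists (y :: ys1), ys2; split=> //; first by move=> y' [<- | /ch1].
  by move=> y' [<- | /inc ?]; [left | right].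
- exists ys1, (y :: ys2); split=> //; first by move=> y' [<- | /ch2 //]; exists z'.
  move=> y' [<- | /inc /List.in_app_iff [? | ?]]; apply/List.in_app_iff;
    by [right; left | left | right; right].
Qed.

Lemma Acc_cons_children z : (forall y, child y z -> Acc_cons y) -> Acc_cons z.
Proof.
move=> acc_ch zs acc_zs; constructor=> ys [_ /children_cons_split].
move=> [ys1 [ys2 [ch1 ch2 inc]]]; apply: Acc_descend_incl inc.
apply: Acc_descend_cat; first by move=> y /ch1 /acc_ch.
exact: Acc_descend_children acc_zs ch2.
Qed.

Lemma Acc_cons_all z : Acc_cons z.
Proof.
elim: z => [|u f IH]; apply: Acc_cons_children => y [i ->]; [case: i | exact: IH].
Qed.

Lemma descend_wf : well_founded descend.
Proof. by elim=> [|z zs IH]; [exact: Acc_descend_nil | exact: Acc_cons_all]. Qed.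

Definition self_bounded zs := forall z, List.In z zs -> ord_lt z zs.

Lemma self_bounded_descend zs : zs <> [::] -> self_bounded zs ->
  exists2 ys, descend ys zs & self_bounded ys.
Proof.
move=> zs_ne lt_zs; have [ys [ys_ne ch_ys le_ys]] := ord_lt_collect lt_zs.
exists ys; first by split; [exact: ys_ne |].
by move=> y /ch_ys [z /le_ys le_z yz]; exact: ord_lt_child le_z yz.
Qed.

Lemma not_self_bounded zs : zs <> [::] -> ~ self_bounded zs.
Proof.
elim: (descend_wf zs) => {}zs _ IH zs_ne /(self_bounded_descend zs_ne).
by move=> [ys [ys_ne ch_ys] ys_sb]; exact: IH (conj ys_ne ch_ys) ys_ne ys_sb.
Qed.

End OrdLists.

Theorem lemma4p5 (U : Type) (El : U -> Type) (HF : index_universe El)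
  (n : nat) (hn : 1 <= n) (alpha : 'I_n -> ord El) :
  ~ (forall i : 'I_n, ord_lt (alpha i) [seq alpha j | j <- enum 'I_n]).
Proof.
move=> lt_alpha; apply: (@not_self_bounded _ _ [seq alpha j | j <- enum 'I_n]).
  by move=> E; move: hn; rewrite -(size_enum_ord n) -(size_map alpha) E.
by move=> x /List.in_map_iff [i [<- _]]; exact: lt_alpha.
Qed.
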